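(* Let $t>0$ and $\gamma\ge 9$, and let $$r_2(\gamma)=\frac{\gamma-1-\sqrt{(\gamma-1)(\gamma-9)}}{4}.$$ Consider the infinite linear program: minimize $\phi$ over real $\phi$ and sequences $(x_i)_{i\ge1}$ with $x_i\ge0$ for all $i$, subject to $$\sum_{i=1}^{n}2x_i+(1-\gamma)x_{n-1}+nt\le\phi\qquad\text{for all } n\ge1,$$ with the convention $x_0=0$ (so the constraints read $2x_1+t\le\phi$, $(3-\gamma)x_1+2x_2+2t\le\phi$, $2x_1+(3-\gamma)x_2+2x_3+3t\le\phi$, etc.). Then the optimal value is $\phi(\gamma)=r_2(\gamma)\,t$, and it is attained by the strategy $$x_i=\tfrac12\big(r_2(\gamma)^i-1\big)t,\qquad i\ge1.$$ Equivalently, in the search-with-turn-cost model described in the context, this strategy has worst-case total cost $\gamma D+r_2(\gamma)t$, and no strategy guarantees worst-case total cost $\gamma D+\phi$ with $\phi<r_2(\gamma)t$.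
   Context: Model of searching on a line with turn cost and no lower bound on the target distance: the searcher alternates sides, at step $i$ walking distance $x_i\ge0$ from the origin on one side and back (the side alternating with $i$); the cost is the total distance walked plus $t$ for each excursion (turn). The target is at unknown distance $D>0$. A strategy guarantees total cost $\gamma D+\phi$ if for every target position the cost of finding it is at most $\gamma D+\phi$; the $n$-th linear constraint above expresses this for a target just beyond $x_{n-1}$ on the side visited at steps $n-1$ and $n+1$. *)

From Stdlib Require Import Reals Lra Lia.
Open Scope R_scope.

Definition r2 (gamma : R) : R :=
  (gamma - 1 - sqrt ((gamma - 1) * (gamma - 9))) / 4.

(* A sequence x_1, x_2, ... is a function x : nat -> R whose value at 0 is
   ignored; x_0 is taken to be 0 by convention. *)
Definition xat (x : nat -> R) (k : nat) : R :=
  match k with O => 0 | _ => x k end.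

Definition lp_constraint (t gamma phi : R) (x : nat -> R) (n : nat) : Prop :=
  sum_f_R0 (fun j => 2 * x (S j)) (n - 1) + (1 - gamma) * xat x (n - 1)
    + INR n * t <= phi.

Definition lp_feasible (t gamma phi : R) (x : nat -> R) : Prop :=
  (forall i : nat, (1 <= i)%nat -> 0 <= x i) /\
  (forall n : nat, (1 <= n)%nat -> lp_constraint t gamma phi x n).

(** Write [T] for the partial sums of [x] and [p = r2 gamma], [q] for the
    roots of [2 z^2 - (gamma - 1) z + (gamma - 1)], so [p + q = p q =
    (gamma - 1) / 2].  The constraints say
    [T (m+1) - (p + q) T m + p q T (m-1) <= (phi - (m+1) t) / 2], and the
    strategy built from [p^i] attains equality with [phi = p t].  If
    [phi < p t], the difference [s] between [T] and the strategy's partial sums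
    satisfies the homogeneous inequality with a constant negative defect;
    factoring the operator as [(E - q)(E - p)] gives
    [s m <= - c (p - 1) m p^m + O(p^m)], which beats the strategy's [O(p^m)]
    partial sums, so [T m] eventually becomes negative although [x >= 0]. *)

From Stdlib Require Import Reals Lra.
Open Scope R_scope.

Fixpoint partial_sum (x : nat -> R) (m : nat) : R :=
  match m with O => 0 | S m' => partial_sum x m' + x (S m') end.

Lemma sum_f_R0_double_partial_sum (x : nat -> R) (n : nat) :
  sum_f_R0 (fun j => 2 * x (S j)) n = 2 * partial_sum x (S n).
Proof.
  induction n as [|n IH]; simpl in *.
  - ring.
  - rewrite IH; ring.
Qed.

Lemma xat_partial_sum (x : nat -> R) (m : nat) :
  xat x m = partial_sum x m - partial_sum x (pred m).
Proof. destruct m; simpl; ring. Qed.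

Lemma lp_constraint_S (t gamma phi : R) (x : nat -> R) (m : nat) :
  lp_constraint t gamma phi x (S m) <->
  2 * partial_sum x (S m) + (1 - gamma) * xat x m + INR (S m) * t <= phi.
Proof.
  unfold lp_constraint; simpl (S m - 1)%nat; rewrite Nat.sub_0_r.
  now rewrite sum_f_R0_double_partial_sum.
Qed.

Definition r2_conj (gamma : R) : R :=
  (gamma - 1 + sqrt ((gamma - 1) * (gamma - 9))) / 4.

Section Roots.
Variable gamma : R.
Hypothesis hgamma : 9 <= gamma.

Let s := sqrt ((gamma - 1) * (gamma - 9)).

Let s_ge0 : 0 <= s.
Proof. apply sqrt_pos. Qed.

Let s_sqr : s * s = (gamma - 1) * (gamma - 9).
Proof. apply sqrt_sqrt; nra. Qed.

Lemma r2_add_conj : 2 * (r2 gamma + r2_conj gamma) = gamma - 1.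
Proof. unfold r2, r2_conj; fold s; lra. Qed.

Lemma r2_mul_conj : r2 gamma * r2_conj gamma = r2 gamma + r2_conj gamma.
Proof. unfold r2, r2_conj; fold s; nra. Qed.

Lemma r2_le_conj : r2 gamma <= r2_conj gamma.
Proof. unfold r2, r2_conj; fold s; lra. Qed.

Lemma one_lt_r2 : 1 < r2 gamma.
Proof. unfold r2; fold s; nra. Qed.

End Roots.

Lemma first_order_recurrence_le (q c : R) (w : nat -> R) :
  1 <= q -> w O = 0 -> (forall m, w (S m) <= q * w m - c) ->
  forall m, (q - 1) * w m <= - c * (q ^ m - 1).
Proof.
  intros hq w0 hw m; induction m as [|m IH]; simpl.
  - rewrite w0; lra.
  - assert (step : (q - 1) * w (S m) <= (q - 1) * (q * w m - c))
      by (apply Rmult_le_compat_l; [lra | apply hw]).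
    nra.
Qed.

Lemma second_order_recurrence_le (p q c : R) (s : nat -> R) :
  1 < p -> p <= q -> p * q = p + q -> 0 <= c -> s O = 0 ->
  (forall m, s (S m) - (p + q) * s m + p * q * s (pred m) <= - c) ->
  forall m, s m <= c * (p ^ m - 1) - c * (p - 1) * INR m * p ^ m.
Proof.
  intros hp hpq hconj hc s0 hs.
  set (w := fun m => s m - p * s (pred m)).
  assert (hw : forall m, (q - 1) * w m <= - c * (q ^ m - 1)).
  { apply first_order_recurrence_le; [lra | unfold w; simpl; rewrite s0; ring |].
    intro m; specialize (hs m); unfold w; simpl pred; lra. }
  assert (w_le : forall m, w m <= - c * (p - 1) * (p ^ m - 1)).
  { intro m.
    assert (hpow : p ^ m <= q ^ m) by (apply pow_incr; lra).
    assert (hpw : (p - 1) * ((q - 1) * w m) <= (p - 1) * (- c * (q ^ m - 1)))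
      by (apply Rmult_le_compat_l; [lra | apply hw]).
    assert (hunit : (p - 1) * (q - 1) = 1) by lra.
    assert (hgap : 0 <= c * (p - 1) * (q ^ m - p ^ m))
      by (apply Rmult_le_pos; [apply Rmult_le_pos |]; lra).
    rewrite <- Rmult_assoc, hunit in hpw; lra. }
  induction m as [|m IH].
  - rewrite s0; simpl; lra.
  - specialize (w_le (S m)); unfold w in w_le; simpl pred in w_le.
    rewrite S_INR; simpl pow.
    assert (p * s m <= p * (c * (p ^ m - 1) - c * (p - 1) * INR m * p ^ m))
      by (apply Rmult_le_compat_l; lra).
    simpl pow in w_le; nra.
Qed.

Definition strategy (p t : R) (i : nat) : R := (p ^ i - 1) * t / 2.

Lemma partial_sum_strategy (p t : R) (m : nat) :
  (p - 1) * (2 * partial_sum (strategy p t) m) = t * (p ^ S m - p - INR m * (p - 1)).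
Proof.
  induction m as [|m IH]; simpl partial_sum.
  - simpl; ring.
  - rewrite S_INR; unfold strategy at 2.
    transitivity ((p - 1) * (2 * partial_sum (strategy p t) m) + (p - 1) * (p ^ S m - 1) * t);
      [field | rewrite IH; simpl; ring].
Qed.

Lemma strategy_constraint_eq (p q t : R) (m : nat) :
  p <> 1 -> p * q = p + q ->
  2 * partial_sum (strategy p t) (S m) - 2 * (p + q) * xat (strategy p t) m
    + INR (S m) * t = p * t.
Proof.
  intros hp1 hconj.
  assert (hxat : xat (strategy p t) m = (p ^ m - 1) * t / 2)
    by (destruct m; unfold strategy; simpl; [field | reflexivity]).
  assert (hp1' : p - 1 <> 0) by lra.
  apply Rmult_eq_reg_l with (p - 1); [| exact hp1'].
  assert (hroot : (p + q) * (p - 1) = p * p) by nra.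
  transitivity ((p - 1) * (2 * partial_sum (strategy p t) (S m))
                - (p + q) * (p - 1) * ((p ^ m - 1) * t) + (p - 1) * (INR (S m) * t));
    [rewrite hxat; field |].
  rewrite partial_sum_strategy, hroot, S_INR; simpl; ring.
Qed.

Lemma partial_sum_strategy_le (p t : R) (m : nat) :
  1 < p -> 0 < t -> (p - 1) * (2 * partial_sum (strategy p t) m) <= t * p ^ S m.
Proof.
  intros hp ht; rewrite partial_sum_strategy.
  assert (0 <= INR m) by apply pos_INR.
  assert (0 <= t * (p + INR m * (p - 1))) by (apply Rmult_le_pos; nra).
  lra.
Qed.

Lemma partial_sum_nonneg (x : nat -> R) :
  (forall i, (1 <= i)%nat -> 0 <= x i) -> forall m, 0 <= partial_sum x m.
Proof.
  intros hx m; induction m as [|m IH]; simpl; [lra |].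
  assert (0 <= x (S m)) by (apply hx; apply le_n_S, Nat.le_0_l); lra.
Qed.

Lemma r2_lower_bound (t gamma phi : R) (x : nat -> R) :
  0 < t -> 9 <= gamma -> lp_feasible t gamma phi x -> r2 gamma * t <= phi.
Proof.
  intros ht hgamma [hx hc].
  assert (hp := one_lt_r2 gamma hgamma).
  assert (hpq := r2_le_conj gamma).
  assert (hconj := r2_mul_conj gamma hgamma).
  assert (hsum := r2_add_conj gamma).
  set (p := r2 gamma) in *; set (q := r2_conj gamma) in *.
  destruct (Rle_or_lt (p * t) phi) as [hle | hlt]; [exact hle | exfalso].
  set (c := (p * t - phi) / 2).
  assert (hc0 : 0 < c) by (unfold c; lra).
  set (s := fun m => partial_sum x m - partial_sum (strategy p t) m).
  assert (hs : forall m, s m <= c * (p ^ m - 1) - c * (p - 1) * INR m * p ^ m).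
  { apply (second_order_recurrence_le p q); [lra | lra | exact hconj | lra | unfold s; simpl; ring |].
    intro m.
    assert (hxm := proj1 (lp_constraint_S t gamma phi x m)
                     (hc (S m) (le_n_S _ _ (Nat.le_0_l m)))).
    assert (heq := strategy_constraint_eq p q t m ltac:(lra) hconj).
    rewrite xat_partial_sum in hxm.
    replace (1 - gamma) with (- (2 * (p + q))) in hxm by lra.
    rewrite xat_partial_sum in heq.
    unfold s, c; rewrite hconj; lra. }
  (* the defect [- c (p-1) m p^m] eventually dominates the strategy's [O(p^m)] *)
  destruct (INR_archimed (2 * (p - 1) * (p - 1) * c) (t * p + 2 * (p - 1) * c))
    as [m hm]; [unfold Rgt; repeat apply Rmult_lt_0_compat; lra |].
  specialize (hs m).
  assert (hA := partial_sum_strategy_le p t m hp ht).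
  assert (hT := partial_sum_nonneg x hx m).
  assert (hpm : 0 < p ^ m) by (apply pow_lt; lra).
  assert (hdom : p ^ m * (t * p + 2 * (p - 1) * c)
                 < p ^ m * (INR m * (2 * (p - 1) * (p - 1) * c)))
    by (apply Rmult_lt_compat_l; lra).
  unfold s in hs; simpl pow in hA.
  nra.
Qed.

Lemma strategy_feasible (t gamma : R) :
  0 < t -> 9 <= gamma -> lp_feasible t gamma (r2 gamma * t) (strategy (r2 gamma) t).
Proof.
  intros ht hgamma.
  assert (hp := one_lt_r2 gamma hgamma).
  assert (hconj := r2_mul_conj gamma hgamma).
  assert (hsum := r2_add_conj gamma).
  split.
  - intros i _; unfold strategy.
    assert (1 <= r2 gamma ^ i) by (apply pow_R1_Rle; lra).
    nra.
  - intros [|m] hn; [inversion hn |].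
    apply lp_constraint_S.
    rewrite <- (strategy_constraint_eq (r2 gamma) (r2_conj gamma) t m); [| lra | exact hconj].
    replace (1 - gamma) with (- (2 * (r2 gamma + r2_conj gamma))) by lra.
    lra.
Qed.

Theorem theorem3 (t gamma : R) (ht : 0 < t) (hgamma : 9 <= gamma) :
  lp_feasible t gamma (r2 gamma * t)
    (fun i => (r2 gamma ^ i - 1) * t / 2) /\
  (forall (phi : R) (x : nat -> R),
     lp_feasible t gamma phi x -> r2 gamma * t <= phi).
Proof.
  split.
  - exact (strategy_feasible t gamma ht hgamma).
  - intros phi x hx; exact (r2_lower_bound t gamma phi x ht hgamma hx).
Qed.
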